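(* Let $1<a<b$ be coprime integers and let $D\subseteq G$ be a subdiagram. Then \[ Q(\mathbf{1}_D)=\mathtt{dinv}(D), \] where $\mathbf{1}_D\in\mathbb{R}^G$ is the indicator vector of $D$ (its $i$-th coordinate is $1$ if $i\in D$ and $0$ otherwise). Moreover, if $D\neq\varnothing$ then $Q(\mathbf{1}_D)>0$.
   Context: Fix coprime integers $1<a<b$. Work in the grid $\mathbb{Z}^2$, with $+x$ pointing east and $+y$ pointing north; elements of $\mathbb{Z}^2$ are called cells. Let $g:\mathbb{Z}^2\to\mathbb{Z}$, $g(x,y)=ab-ax-by$ (the value of the cell). For a cell $c=(x,y)$ and an integer $k$, write $c-ka:=(x+k,y)$ (the cell $k$ steps east) and $c-kb:=(x,y+k)$ (the cell $k$ steps north); thus $g(c-ka)=g(c)-ka$ and $g(c-kb)=g(c)-kb$. Let $G=\{(x,y)\in\mathbb{Z}_{\ge1}^2: g(x,y)>0\}$ ($g$ is injective on $G$). A subdiagram is a subset $D\subseteq G$ such that whenever $(x,y)\in D$, $(x',y')\in G$, $x'\le x$ and $y'\le y$, we have $(x',y')\in D$ (equivalently, $D$ is upward closed for the partial order $i\preceq j \iff g(j)-g(i)\in\{ma+nb: m,n\in\mathbb{Z}_{\ge0}\}$). Define $K:\mathbb{Z}\to\mathbb{Z}$ by $K(d)=\mathbf{1}_{d\ge0}-\mathbf{1}_{d\ge a}-\mathbf{1}_{d\ge b}+\mathbf{1}_{d\ge a+b}$ (equivalently $K(d)=\mathbf{1}_{0\le d<a}-\mathbf{1}_{b\le d<a+b}$),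 and the quadratic form on $\mathbb{R}^G$ \[ Q(\mathbf{n})=\sum_{i,j\in G}K\big(g(j)-g(i)\big)\,n_in_j,\qquad \mathbf{n}=(n_i)_{i\in G}. \] For a subdiagram $D$ and $c\in D$, let $\mathrm{arm}_D(c)=\max\{k\ge0: c-ka\in D\}$ and $\mathrm{leg}_D(c)=\max\{k\ge 0: c-kb\in D\}$. Define \[ \mathtt{dinv}(D)=\#\Big\{c\in D:\ \frac{\mathrm{leg}_D(c)}{\mathrm{arm}_D(c)+1}<\frac ab<\frac{\mathrm{leg}_D(c)+1}{\mathrm{arm}_D(c)}\Big\}, \] with the convention that $\frac{\mathrm{leg}_D(c)+1}{0}=+\infty$. *)

From mathcomp Require Import all_boot all_order all_algebra.
Set Implicit Arguments. Unset Strict Implicit. Unset Printing Implicit Defensive.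
Import Order.TTheory GRing.Theory Num.Theory.
Local Open Scope ring_scope.

(* Cells of G: every (x,y) in G satisfies 1 <= x < b and 1 <= y < a
   (since a*x + b*y < a*b), so G is represented inside the finite type
   'I_b * 'I_a; the first coordinate is x (east), the second y (north). *)
Definition cell (a b : nat) := ('I_b * 'I_a)%type.

Definition gval (a b x y : nat) : int := (a * b)%:Z - (a * x)%:Z - (b * y)%:Z.
Definition g (a b : nat) (c : cell a b) : int := gval a b c.1 c.2.

Definition inG (a b : nat) (c : cell a b) : bool :=
  [&& (0 < c.1)%N, (0 < c.2)%N & 0 < g c].

Definition subdiagram (a b : nat) (D : {set cell a b}) : Prop :=
  (forall c, c \in D -> inG c) /\
  (forall c c' : cell a b, c \in D -> inG c' ->
      (c'.1 <= c.1)%N -> (c'.2 <= c.2)%N -> c' \in D).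

Definition inD (a b : nat) (D : {set cell a b}) (x y : nat) : bool :=
  [exists c in D, (nat_of_ord c.1 == x) && (nat_of_ord c.2 == y)].

(* arm_D(c) = max {k >= 0 : c - ka = (x+k, y) in D};
   any such k satisfies x + k < b, so k < b. *)
Definition arm (a b : nat) (D : {set cell a b}) (c : cell a b) : nat :=
  \max_(k < b | inD D (c.1 + k) c.2) (k : nat).
(* leg_D(c) = max {k >= 0 : c - kb = (x, y+k) in D}; k < a. *)
Definition leg (a b : nat) (D : {set cell a b}) (c : cell a b) : nat :=
  \max_(k < a | inD D c.1 (c.2 + k)) (k : nat).

(* dinv condition: leg/(arm+1) < a/b < (leg+1)/arm, with (leg+1)/0 = +oo *)
Definition dinv_cond (a b : nat) (D : {set cell a b}) (c : cell a b) : bool :=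
  let r : rat := a%:R / b%:R in
  ((leg D c)%:R / (arm D c).+1%:R < r) &&
  ((arm D c == 0%N) || (r < (leg D c).+1%:R / (arm D c)%:R)).

Definition dinv (a b : nat) (D : {set cell a b}) : nat :=
  #|[set c in D | dinv_cond D c]|.

Definition ind (P : bool) : int := if P then 1 else 0.
Definition Kf (a b : nat) (d : int) : int :=
  ind (0 <= d) - ind (a%:Z <= d) - ind (b%:Z <= d) + ind ((a + b)%N%:Z <= d).

Definition Q (a b : nat) (R : numDomainType) (n : cell a b -> R) : R :=
  \sum_(i | inG i) \sum_(j | inG j) ((Kf a b (g j - g i))%:~R * n i * n j).

Definition indic (a b : nat) (R : numDomainType) (D : {set cell a b})
  : cell a b -> R := fun i => if i \in D then 1 else 0.

From mathcomp Require Import all_boot all_order all_algebra.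
From mathcomp Require Import reals.
From mathcomp Require Import zify.
Set Implicit Arguments. Unset Strict Implicit. Unset Printing Implicit Defensive.
Import Order.TTheory GRing.Theory Num.Theory.
Local Open Scope ring_scope.

(* Induct on #|D|, removing the corner c = (x0, y0): the rightmost cell of the
   top row.  This changes Q by the sum of K(g j - g c) over j in D plus the sum
   of K(g c - g i) over i in D \ c.  Since K(d) = [0 <= d < a] - [b <= d < a + b],
   the terms coming from one row y telescope in x to a difference of two
   indicators.  On the dinv side only the cells of the top row (whose arm drops
   by one) and the cells (x0, y) (whose leg drops by one) change, and in each
   row the change is again a difference of two indicators, which agrees with
   the one found for Q.  The corner itself has arm = leg = 0, so it always
   counts in dinv, whence Q > 0 for nonempty D. *)

Lemma indP (P : bool) : (P /\ ind P = 1) \/ (~~ P /\ ind P = 0).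
Proof. by rewrite /ind; case: P; [left|right]. Qed.

(* Abstracts every indicator of the goal into a fresh integer together with
   its defining disjunction, leaving a goal for [lia]. *)
Ltac generalize_ind := rewrite /Kf;
  repeat match goal with |- context [ind ?P] => have := indP P; move: (ind P) => ? end.

Section KfRowSums.
Variables a b : nat.

Lemma sum_Kf_sub_mul (u : int) m :
  \sum_(1 <= x < m.+1) Kf a b (u - (a * x)%:Z) =
  ind ((a%:Z <= u) && (u < (a * m.+1)%:Z)) -
  ind (((a + b)%N%:Z <= u) && (u < (a * m.+1 + b)%N%:Z)).
Proof.
elim: m => [|m IH]; first by rewrite big_geq // muln1; generalize_ind; lia.
rewrite big_nat_recr //= IH !(mulnS a) !PoszD.
have : 0 <= (a * m)%:Z by [].
move: (Posz (a * m)) => A A_ge0; generalize_ind; lia.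
Qed.

Lemma sum_Kf_mul_sub (u : int) m :
  \sum_(1 <= x < m.+1) Kf a b ((a * x)%:Z - u) =
  ind ((0 < u) && (u <= (a * m)%:Z)) -
  ind ((0 < u + b%:Z) && (u + b%:Z <= (a * m)%:Z)).
Proof.
elim: m => [|m IH]; first by rewrite big_geq // muln0; generalize_ind; lia.
rewrite big_nat_recr //= IH !(mulnS a) !PoszD.
have : 0 <= (a * m)%:Z by [].
move: (Posz (a * m)) => A A_ge0; generalize_ind; lia.
Qed.

End KfRowSums.

(* [dinv_cond] for arm A and leg L, with the fractions cleared. *)
Definition dinv_condn (a b A L : nat) :=
  (b * L < a * A.+1)%N && ((A == 0%N) || (a * A < b * L.+1)%N).

Section DinvCondn.
Variables a b : nat.
Hypothesis a_gt0 : (0 < a)%N.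
Hypothesis ltab : (a < b)%N.

Lemma dinv_condnE A L : dinv_condn a b A L = (b * L < a * A.+1)%N && (a * A < b * L.+1)%N.
Proof.
rewrite /dinv_condn; case: eqP => [->|] //=.
by rewrite muln0 muln_gt0 (ltn_trans a_gt0 ltab).
Qed.

Lemma dinv_condn_leg0 A : dinv_condn a b A 0 = (a * A < b)%N.
Proof. rewrite dinv_condnE muln0 muln1 /=; lia. Qed.

(* Left: the telescoped Q-sums of [sum_Kf_sub_mul] and [sum_Kf_mul_sub] for the
   row t >= 1 steps below the corner (x0, y0), whose last cell is x0 + A.
   Right: the change of dinv in that row, where only the cell below the corner
   changes, its leg dropping from t to t - 1. *)
Lemma lower_row_indicatorsE x0 A t : (1 <= x0)%N -> (1 <= t)%N ->
  (ind ((a%:Z <= (a * x0 + b * t)%N%:Z) &&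
        ((a * x0 + b * t)%N%:Z < (a * (x0 + A).+1)%:Z)) -
   ind (((a + b)%N%:Z <= (a * x0 + b * t)%N%:Z) &&
        ((a * x0 + b * t)%N%:Z < (a * (x0 + A).+1 + b)%N%:Z))) +
  (ind ((0 < (a * x0 + b * t)%N%:Z) && ((a * x0 + b * t)%N%:Z <= (a * (x0 + A))%:Z)) -
   ind ((0 < (a * x0 + b * t)%N%:Z + b%:Z) &&
        ((a * x0 + b * t)%N%:Z + b%:Z <= (a * (x0 + A))%:Z)))
  = ind (dinv_condn a b A t) - ind (dinv_condn a b A t.-1).
Proof.
move=> x0_gt0; case: t => // t _; rewrite !dinv_condnE /=.
rewrite !(mulnS a) !(mulnS b) !mulnDr !PoszD.
have : (a <= a * x0)%N by rewrite -{1}(muln1 a) leq_mul2l x0_gt0 orbT.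
have : 0 <= (a * A)%:Z by [].
have : 0 <= (b * t)%:Z by [].
move: (a * x0)%N (a * A)%N (b * t)%N => X Y T T_ge0 Y_ge0 X_ge.
generalize_ind; lia.
Qed.

End DinvCondn.

Definition armAt (a b : nat) (E : {set cell a b}) (x y : nat) : nat :=
  \max_(k < b | inD E (x + k) y) (k : nat).
Definition legAt (a b : nat) (E : {set cell a b}) (x y : nat) : nat :=
  \max_(k < a | inD E x (y + k)) (k : nat).

Lemma bigmax_ord_prefix n N (P : pred nat) : (N < n)%N ->
  (forall k, (k < n)%N -> P k = (k <= N)%N) -> \max_(k < n | P k) (k : nat) = N.
Proof.
move=> ltNn hP; apply/eqP; rewrite eqn_leq; apply/andP; split.
  by apply/bigmax_leqP => k; rewrite hP.
by apply: (leq_bigmax_cond (Ordinal ltNn)) => /=; rewrite hP.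
Qed.

Lemma ltr_nat_frac (p q r s : nat) : (0 < q)%N -> (0 < s)%N ->
  (p%:R / q%:R < r%:R / s%:R :> rat) = (p * s < r * q)%N.
Proof.
move=> q_gt0 s_gt0.
by rewrite ltr_pdivlMr ?ltr0n // mulrAC ltr_pdivrMr ?ltr0n // -!natrM ltr_nat.
Qed.

Lemma sum_ind_row (P : pred nat) (m n : nat) (F : nat -> int) : (m < n)%N ->
  (forall x, P x = (0 < x <= m)%N) ->
  \sum_(0 <= x < n) (if P x then F x else 0) = \sum_(1 <= x < m.+1) F x.
Proof.
move=> ltmn hP; rewrite -big_mkcond (eq_bigl (fun x => (0 < x <= m)%N)) //.
rewrite (@big_cat_nat _ _ _ m.+1) // (@big_cat_nat _ _ _ 1) //=; try lia.
rewrite [X in X + _ + _]big_nat_cond [X in _ + X]big_nat_cond.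
rewrite [X in X + _ + _]big_pred0 => [|i /=]; last by lia.
rewrite [X in _ + X]big_pred0 => [|i /=]; last by lia.
rewrite add0r addr0 [LHS]big_nat_cond [RHS]big_nat_cond.
by apply: eq_bigl => i /=; lia.
Qed.

Lemma sum_nat_single (n i0 : nat) (f : nat -> int) : (i0 < n)%N ->
  (forall i, i != i0 -> f i = 0) -> \sum_(0 <= i < n) f i = f i0.
Proof.
move=> lti0n hf; rewrite (bigD1_seq i0) ?mem_index_iota ?iota_uniq //=.
by rewrite big1 ?addr0 // => i /hf.
Qed.

Section Grid.
Variables a b : nat.
Implicit Types (E : {set cell a b}) (c : cell a b).

Lemma cell_inj c c' : c.1 = c'.1 :> nat -> c.2 = c'.2 :> nat -> c = c'.
Proof. by case: c c' => [x y] [x' y'] /= e1 e2; congr pair; apply: val_inj. Qed.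

Lemma inD_mem E c : inD E c.1 c.2 = (c \in E).
Proof.
apply/existsP/idP => [[c' /andP[Ec' /andP[/eqP e1 /eqP e2]]]|Ec].
  by rewrite -(cell_inj e1 e2).
by exists c; rewrite Ec !eqxx.
Qed.

Lemma inDP E (x y : nat) :
  inD E x y -> exists2 c, c \in E & (c.1 : nat) = x /\ (c.2 : nat) = y.
Proof. by case/existsP => c /andP[Ec /andP[/eqP e1 /eqP e2]]; exists c. Qed.

Lemma inD_setD1 E c (x y : nat) :
  inD (E :\ c) x y = inD E x y && ~~ ((x == c.1) && (y == c.2)).
Proof.
apply/idP/andP.
  case/inDP => c' /setD1P[c'_neq Ec'] [e1 e2]; split; first by rewrite -e1 -e2 inD_mem.
  apply/negP => /andP[/eqP h1 /eqP h2]; move/eqP: c'_neq; apply.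
  by apply: cell_inj; [rewrite e1 h1 | rewrite e2 h2].
case=> /inDP[c' Ec' [e1 e2]] xy_neq; rewrite -e1 -e2 inD_mem.
apply/setD1P; split=> //; apply/eqP => c'E; move: xy_neq.
by rewrite -e1 -e2 c'E !eqxx.
Qed.

Lemma sum_set_grid E (F : nat -> nat -> int) :
  \sum_(c in E) F c.1 c.2 =
  \sum_(0 <= y < a) \sum_(0 <= x < b) (if inD E x y then F x y else 0).
Proof.
rewrite big_mkcond /=.
transitivity (\sum_(x : 'I_b) \sum_(y : 'I_a) (if (x, y) \in E then F x y else 0)).
  by rewrite pair_bigA; apply: eq_bigr => -[x y] _.
rewrite exchange_big /= big_mkord; apply: eq_bigr => y _.
rewrite big_mkord; apply: eq_bigr => x _.
by rewrite -(inD_mem E (x, y)).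
Qed.

Lemma armAt_row E x y m : (forall x', inD E x' y = (0 < x' <= m)%N) ->
  (0 < x <= m)%N -> (m < b)%N -> armAt E x y = (m - x)%N.
Proof.
move=> rowE x_in ltmb.
rewrite /armAt (@bigmax_ord_prefix b (m - x) (fun k => inD E (x + k) y)); first by [].
  by lia.
by move=> k _; rewrite rowE; lia.
Qed.

Lemma legAt_col E x y h : (forall y', inD E x y' = (0 < y' <= h)%N) ->
  (0 < y <= h)%N -> (h < a)%N -> legAt E x y = (h - y)%N.
Proof.
move=> colE y_in ltha.
rewrite /legAt (@bigmax_ord_prefix a (h - y) (fun k => inD E x (y + k))); first by [].
  by lia.
by move=> k _; rewrite colE; lia.
Qed.

Lemma armAt_setD1 E c (x y : nat) : y != c.2 -> armAt (E :\ c) x y = armAt E x y.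
Proof.
by move=> y_neq; apply: eq_bigl => k; rewrite inD_setD1 (negbTE y_neq) andbF andbT.
Qed.

Lemma legAt_setD1 E c (x y : nat) : x != c.1 -> legAt (E :\ c) x y = legAt E x y.
Proof. by move=> x_neq; apply: eq_bigl => k; rewrite inD_setD1 (negbTE x_neq) andbT. Qed.

Lemma gval_gt0 x y : (0 < gval a b x y) = (a * x + b * y < a * b)%N.
Proof. rewrite /gval; lia. Qed.

Lemma gvalB x y x0 y0 : (y <= y0)%N ->
  gval a b x y - gval a b x0 y0 = (a * x0 + b * (y0 - y))%N%:Z - (a * x)%:Z.
Proof. rewrite /gval; nia. Qed.

Lemma gvalB_swap x y x0 y0 : (y <= y0)%N ->
  gval a b x0 y0 - gval a b x y = (a * x)%:Z - (a * x0 + b * (y0 - y))%N%:Z.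
Proof. rewrite /gval; nia. Qed.

Variable D : {set cell a b}.
Hypothesis HD : subdiagram D.

Lemma inD_bounds x y : inD D x y ->
  [/\ (0 < x)%N, (0 < y)%N, (x < b)%N, (y < a)%N & (a * x + b * y < a * b)%N].
Proof.
case/inDP => c Dc [<- <-].
by have := HD.1 c Dc; rewrite /inG /g gval_gt0 => /and3P[].
Qed.

Lemma inD_downward x y x' y' : inD D x y -> (0 < x' <= x)%N -> (0 < y' <= y)%N ->
  inD D x' y'.
Proof.
move=> Dxy /andP[x'_gt0 le_x'x] /andP[y'_gt0 le_y'y].
have [_ _ ltxb ltya gxy_gt0] := inD_bounds Dxy.
case/inDP: Dxy => c Dc [e1 e2].
have ltx'b : (x' < b)%N by apply: leq_ltn_trans ltxb.
have lty'a : (y' < a)%N by apply: leq_ltn_trans ltya.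
pose c' : cell a b := (Ordinal ltx'b, Ordinal lty'a).
rewrite -[x']/(c'.1 : nat) -[y']/(c'.2 : nat) inD_mem.
apply: (HD.2 c) => //=; rewrite ?e1 ?e2 //.
rewrite /inG /g /= gval_gt0 x'_gt0 y'_gt0 /=.
by apply: leq_ltn_trans gxy_gt0; apply: leq_add; rewrite leq_mul2l ?le_x'x ?le_y'y orbT.
Qed.

End Grid.

Definition Qint (a b : nat) (D : {set cell a b}) : int :=
  \sum_(i in D) \sum_(j in D) Kf a b (g j - g i).

Lemma Q_indicE (a b : nat) (R : numDomainType) (D : {set cell a b}) :
  (forall c, c \in D -> inG c) -> Q (indic R D) = (Qint D)%:~R.
Proof.
move=> DG; rewrite /Q /Qint (big_morph (fun z : int => z%:~R) (@intrD R) (mulr0z 1)).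
rewrite big_mkcond [RHS]big_mkcond /=; apply: eq_bigr => i _.
rewrite /indic; case Di: (i \in D); last first.
  by case: (inG i) => //; apply: big1 => j _; rewrite mulr0 mul0r.
rewrite DG // (big_morph (fun z : int => z%:~R) (@intrD R) (mulr0z 1)).
rewrite big_mkcond [RHS]big_mkcond /=; apply: eq_bigr => j _.
case Dj: (j \in D); last by case: (inG j) => //; rewrite mulr0.
by rewrite DG // !mulr1.
Qed.

Lemma Qint_setD1 (a b : nat) (D : {set cell a b}) c : c \in D ->
  Qint D = Qint (D :\ c) + (\sum_(j in D) Kf a b (g j - g c) +
                            \sum_(i in D :\ c) Kf a b (g c - g i)).
Proof.
move=> Dc; rewrite /Qint (big_setD1 c Dc) /=.
rewrite [X in _ + X = _](eq_bigr (fun i => Kf a b (g c - g i) +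
                                   \sum_(j in D :\ c) Kf a b (g j - g i))).
  by rewrite [X in _ + X = _]big_split /= addrA addrC.
by move=> i _; rewrite (big_setD1 c Dc).
Qed.

Section Dinv.
Variables a b : nat.
Hypothesis a_gt0 : (0 < a)%N.
Hypothesis ltab : (a < b)%N.

Lemma dinv_condE (D : {set cell a b}) c :
  dinv_cond D c = dinv_condn a b (armAt D c.1 c.2) (legAt D c.1 c.2).
Proof.
have b_gt0 : (0 < b)%N by apply: ltn_trans ltab.
rewrite /dinv_cond /dinv_condn -[arm D c]/(armAt D c.1 c.2) -[leg D c]/(legAt D c.1 c.2).
rewrite ltr_nat_frac // [(_ * b)%N]mulnC; congr (_ && _).
by case: eqP => //= /eqP A_neq0; rewrite ltr_nat_frac // ?lt0n // [(_ * b)%N]mulnC.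
Qed.

Lemma dinv_sum_ind (D : {set cell a b}) :
  (dinv D)%:Z = \sum_(c in D) ind (dinv_condn a b (armAt D c.1 c.2) (legAt D c.1 c.2)).
Proof.
rewrite /dinv -sum1_card (big_morph Posz PoszD (erefl _)) big_mkcond /=.
rewrite [RHS]big_mkcond /=; apply: eq_bigr => c _.
by rewrite inE -dinv_condE; case: (c \in D); case: (dinv_cond D c).
Qed.

End Dinv.

Section Corner.
Variables a b : nat.
Hypothesis a_gt0 : (0 < a)%N.
Hypothesis ltab : (a < b)%N.
Variable D : {set cell a b}.
Hypothesis HD : subdiagram D.
Variable c : cell a b.
Hypothesis Dc : c \in D.
Hypothesis c_top : forall c', c' \in D -> (c'.2 <= c.2)%N.
Hypothesis c_right : forall c', c' \in D -> (c'.2 : nat) = c.2 -> (c'.1 <= c.1)%N.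

Local Notation x0 := (nat_of_ord c.1).
Local Notation y0 := (nat_of_ord c.2).
Local Notation D' := (D :\ c).

Lemma inD_corner : inD D x0 y0. Proof. by rewrite inD_mem. Qed.

Lemma inD_le_corner x y : inD D x y -> (y <= y0)%N.
Proof. by case/inDP => c' Dc' [_ <-]; apply: c_top. Qed.

Lemma corner_bounds :
  [/\ (0 < x0)%N, (0 < y0)%N, (x0 < b)%N, (y0 < a)%N & (a * x0 + b * y0 < a * b)%N].
Proof. exact: (inD_bounds HD inD_corner). Qed.

Lemma inD_top_row x : inD D x y0 = (0 < x <= x0)%N.
Proof.
have [x0_gt0 y0_gt0 _ _ _] := corner_bounds.
apply/idP/idP => [Dxy0|x_in]; last first.
  by apply: (inD_downward HD inD_corner) => //; rewrite y0_gt0 leqnn.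
have [-> _ _ _ _] := inD_bounds HD Dxy0.
by case/inDP: Dxy0 => c' Dc' [<- e2]; apply: c_right.
Qed.

Lemma inD_setD1_top_row x : inD D' x y0 = (0 < x <= x0.-1)%N.
Proof. rewrite inD_setD1 inD_top_row eqxx andbT; lia. Qed.

Lemma inD_row_out x y : (y == 0%N) || (y0 < y)%N -> inD D x y = false.
Proof.
move=> y_out; apply/negbTE/negP => Dxy.
have [_ y_gt0 _ _ _] := inD_bounds HD Dxy; have := inD_le_corner Dxy; lia.
Qed.

Lemma inD_corner_col x : (0 < x <= x0)%N -> forall y, inD D x y = (0 < y <= y0)%N.
Proof.
move=> x_in y; apply/idP/idP => [Dxy|y_in]; last exact: (inD_downward HD inD_corner).
by have [_ -> _ _ _] := inD_bounds HD Dxy; rewrite (inD_le_corner Dxy).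
Qed.

Lemma inD_setD1_corner_col y : inD D' x0 y = (0 < y <= y0.-1)%N.
Proof.
have [x0_gt0 _ _ _ _] := corner_bounds.
rewrite inD_setD1 (inD_corner_col (x := x0)) ?x0_gt0 ?leqnn // eqxx /=; lia.
Qed.

Definition row_end y := \max_(x < b | inD D x y) (x : nat).

Lemma lower_row y : (0 < y <= y0)%N ->
  [/\ (x0 <= row_end y)%N, (row_end y < b)%N &
      forall x, inD D x y = (0 < x <= row_end y)%N].
Proof.
move=> y_in; have [x0_gt0 _ ltx0b _ _] := corner_bounds.
have Dx0y : inD D x0 y by apply: (inD_downward HD inD_corner) => //; rewrite x0_gt0 leqnn.
have b_gt0 : (0 < b)%N by apply: ltn_trans ltab.
have lt_end_b : (row_end y < b)%N.
  by rewrite -(prednK b_gt0) ltnS; apply/bigmax_leqP => k _; rewrite -ltnS prednK.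
split=> //; first exact: (leq_bigmax_cond (Ordinal ltx0b)).
move=> x; apply/idP/idP => [Dxy|x_in].
  have [x_gt0 _ ltxb _ _] := inD_bounds HD Dxy.
  by rewrite x_gt0; apply: (leq_bigmax_cond (Ordinal ltxb)).
case Dxy: (inD D x y) => //.
suff : (row_end y <= x.-1)%N by lia.
apply/bigmax_leqP => k Dky; case: (ltnP k x) => [|le_xk]; first by lia.
have : inD D x y by apply: (inD_downward HD Dky); lia.
by rewrite Dxy.
Qed.

Lemma armAt_top_row x : (0 < x <= x0)%N -> armAt D x y0 = (x0 - x)%N.
Proof. by have [_ _ ltx0b _ _] := corner_bounds; move/(armAt_row inD_top_row); apply. Qed.

Lemma legAt_top_row x : (0 < x <= x0)%N -> legAt D x y0 = 0%N.
Proof.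
have [_ y0_gt0 _ lty0a _] := corner_bounds; move=> x_in.
by rewrite (legAt_col (inD_corner_col x_in)) ?subnn // y0_gt0 leqnn.
Qed.

Lemma armAt_setD1_top_row x : (0 < x <= x0.-1)%N -> armAt D' x y0 = (x0.-1 - x)%N.
Proof.
have [_ _ ltx0b _ _] := corner_bounds; move=> x_in.
by apply: (armAt_row inD_setD1_top_row x_in); lia.
Qed.

Lemma legAt_setD1_top_row x : (0 < x <= x0.-1)%N -> legAt D' x y0 = 0%N.
Proof. by move=> x_in; rewrite legAt_setD1 ?legAt_top_row //; lia. Qed.

Definition row_Kf_change y :=
  \sum_(0 <= x < b) (if inD D x y then Kf a b (gval a b x y - gval a b x0 y0) else 0) +
  \sum_(0 <= x < b) (if inD D' x y then Kf a b (gval a b x0 y0 - gval a b x y) else 0).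

Definition row_dinv_change y :=
  \sum_(0 <= x < b)
    (if inD D x y then ind (dinv_condn a b (armAt D x y) (legAt D x y)) else 0) -
  \sum_(0 <= x < b)
    (if inD D' x y then ind (dinv_condn a b (armAt D' x y) (legAt D' x y)) else 0).

Lemma row_Kf_change_top : row_Kf_change y0 = ind (a * x0.-1 < b)%N.
Proof.
have [x0_gt0 _ ltx0b _ _] := corner_bounds.
have ltx0b' : (x0.-1 < b)%N by lia.
rewrite /row_Kf_change (sum_ind_row _ ltx0b inD_top_row).
rewrite (sum_ind_row _ ltx0b' inD_setD1_top_row).
under eq_bigr => x _ do rewrite (@gvalB a b _ _ _ _ (leqnn _)).
under [X in _ + X]eq_bigr => x _ do rewrite (@gvalB_swap a b _ _ _ _ (leqnn _)).
rewrite sum_Kf_sub_mul sum_Kf_mul_sub subnn muln0 addn0.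
move: (nat_of_ord c.1) x0_gt0 => [//|n] _ /=.
rewrite -ltz_nat !(mulnS a) !PoszD.
have : 0 <= (a * n)%:Z by [].
move: (Posz (a * n)) => A A_ge0; have := a_gt0; have := ltab.
generalize_ind; lia.
Qed.

Lemma row_dinv_change_top : row_dinv_change y0 = ind (a * x0.-1 < b)%N.
Proof.
have [x0_gt0 _ ltx0b _ _] := corner_bounds.
have ltx0b' : (x0.-1 < b)%N by lia.
rewrite /row_dinv_change (sum_ind_row _ ltx0b inD_top_row).
rewrite (sum_ind_row _ ltx0b' inD_setD1_top_row).
rewrite (@eq_big_nat _ _ _ 1 x0.+1 _ (fun x => ind (a * (x0 - x) < b)%N)); last first.
  by move=> x x_in; rewrite armAt_top_row ?legAt_top_row ?dinv_condn_leg0 //; lia.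
rewrite (@eq_big_nat _ _ _ 1 x0.-1.+1 _ (fun x => ind (a * (x0.-1 - x) < b)%N)); last first.
  move=> x x_in.
  by rewrite armAt_setD1_top_row ?legAt_setD1_top_row ?dinv_condn_leg0 //; lia.
move: (nat_of_ord c.1) x0_gt0 => [//|n] _ /=.
by rewrite big_nat_recl // subn1 addrK.
Qed.

Section LowerRow.
Variable y : nat.
Hypothesis y_in : (0 < y < y0)%N.

Local Notation A := (row_end y - x0)%N.
Local Notation t := (y0 - y)%N.

Lemma row_dinv_change_lower :
  row_dinv_change y = ind (dinv_condn a b A t) - ind (dinv_condn a b A t.-1).
Proof.
have [x0_gt0 _ ltx0b lty0a _] := corner_bounds.
have y_in' : (0 < y <= y0)%N by lia.
have [le_x0_end lt_end_b Dy] := lower_row y_in'.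
have y_neq : y != y0 by lia.
rewrite /row_dinv_change -sumrB (sum_nat_single ltx0b); last first.
  move=> x x_neq; rewrite inD_setD1 (negbTE x_neq) /= armAt_setD1 // legAt_setD1 //.
  by case: (inD D x y); rewrite subrr.
have x0_in : (0 < x0 <= row_end y)%N by rewrite x0_gt0.
rewrite inD_setD1 Dy x0_in eqxx (negbTE y_neq) /= armAt_setD1 //.
rewrite (armAt_row Dy x0_in lt_end_b).
rewrite (legAt_col (inD_corner_col (x := x0) _)) ?x0_gt0 ?leqnn //; try lia.
rewrite (legAt_col inD_setD1_corner_col); try lia.
by have -> : (y0.-1 - y = t.-1)%N by lia.
Qed.

Lemma row_Kf_change_lower :
  row_Kf_change y = ind (dinv_condn a b A t) - ind (dinv_condn a b A t.-1).
Proof.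
have [x0_gt0 _ _ _ _] := corner_bounds.
have y_in' : (0 < y <= y0)%N by lia.
have le_y_y0 : (y <= y0)%N by lia.
have [le_x0_end lt_end_b Dy] := lower_row y_in'.
have y_neq : y != y0 by lia.
have D'y x : inD D' x y = (0 < x <= row_end y)%N.
  by rewrite inD_setD1 Dy (negbTE y_neq) andbF andbT.
rewrite /row_Kf_change (sum_ind_row _ lt_end_b Dy) (sum_ind_row _ lt_end_b D'y).
under eq_bigr => x _ do rewrite (@gvalB a b _ _ _ _ le_y_y0).
under [X in _ + X]eq_bigr => x _ do rewrite (@gvalB_swap a b _ _ _ _ le_y_y0).
rewrite sum_Kf_sub_mul sum_Kf_mul_sub.
rewrite -[row_end y](subnKC le_x0_end) addKn.
by apply: lower_row_indicatorsE => //; lia.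
Qed.

End LowerRow.

Lemma row_Kf_dinv_change y : row_Kf_change y = row_dinv_change y.
Proof.
case: (boolP ((y == 0%N) || (y0 < y)%N)) => [y_out|y_in].
  have D'y x : inD D' x y = false by rewrite inD_setD1 inD_row_out.
  rewrite /row_Kf_change /row_dinv_change.
  by rewrite !big1 ?subrr ?addr0 // => x _; rewrite ?D'y ?inD_row_out.
case: (eqVneq y y0) => [->|y_neq]; first by rewrite row_Kf_change_top row_dinv_change_top.
by rewrite row_Kf_change_lower ?row_dinv_change_lower //; lia.
Qed.

Lemma Qint_dinv_setD1 : Qint D' = (dinv D')%:Z -> Qint D = (dinv D)%:Z.
Proof.
move=> IH; rewrite (Qint_setD1 Dc) IH.
rewrite (sum_set_grid D (fun x y => Kf a b (gval a b x y - gval a b x0 y0))).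
rewrite (sum_set_grid D' (fun x y => Kf a b (gval a b x0 y0 - gval a b x y))).
rewrite -big_split /=.
under eq_bigr => y _ do rewrite -/(row_Kf_change y) row_Kf_dinv_change.
rewrite !(dinv_sum_ind a_gt0 ltab).
rewrite (sum_set_grid D (fun x y => ind (dinv_condn a b (armAt D x y) (legAt D x y)))).
rewrite (sum_set_grid D' (fun x y => ind (dinv_condn a b (armAt D' x y) (legAt D' x y)))).
by rewrite /row_dinv_change sumrB addrC subrK.
Qed.

Lemma subdiagram_setD1_corner : subdiagram D'.
Proof.
split=> [c' /setD1P[_ Dc']|c1 c2 /setD1P[c1_neq Dc1] Gc2 le12 le12']; first exact: HD.1.
apply/setD1P; split; last exact: (HD.2 c1 c2).
apply/eqP => c2E; rewrite c2E in le12 le12'; move/eqP: c1_neq; apply.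
have e2 : (c1.2 : nat) = c.2 by apply/eqP; rewrite eqn_leq le12' c_top.
by apply: cell_inj => //; apply/eqP; rewrite eqn_leq le12 c_right.
Qed.

Lemma dinv_cond_corner : dinv_cond D c.
Proof.
have [x0_gt0 _ _ _ _] := corner_bounds.
have x0_in : (0 < x0 <= x0)%N by rewrite x0_gt0 leqnn.
rewrite (dinv_condE a_gt0 ltab) armAt_top_row // legAt_top_row //.
by rewrite subnn dinv_condn_leg0; lia.
Qed.

End Corner.

Lemma exists_corner (a b : nat) (D : {set cell a b}) : D != set0 ->
  exists c, [/\ c \in D, forall c', c' \in D -> (c'.2 <= c.2)%N &
             forall c', c' \in D -> (c'.2 : nat) = c.2 -> (c'.1 <= c.1)%N].
Proof.
case/set0Pn => c0 Dc0.
have [c Dc c_max] := @arg_maxnP _ c0 (mem D) (fun c : cell a b => (c.2 * b + c.1)%N) Dc0.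
exists c; split=> // c' Dc'; have /= le_key := c_max c' Dc'; last first.
  by move=> e; rewrite e leq_add2l in le_key.
have := ltn_ord c'.1; have := ltn_ord c.1; move: le_key.
move: (c'.2 : nat) (c.2 : nat) (c'.1 : nat) (c.1 : nat) => y' y x' x le_key ltxb ltx'b.
case: (leqP y' y) => // lt_y_y'.
have : (y.+1 * b <= y' * b)%N by rewrite leq_mul2r lt_y_y' orbT.
rewrite mulSn; lia.
Qed.

Lemma Qint_dinv (a b : nat) (D : {set cell a b}) : (0 < a)%N -> (a < b)%N ->
  subdiagram D -> Qint D = (dinv D)%:Z.
Proof.
move=> a_gt0 ltab; move Dn: #|D| => n; elim: n D Dn => [|n IH] D Dn HD.
  rewrite (cards0_eq Dn) /Qint big_set0 /dinv.
  by rewrite (_ : [set c in set0 | _] = set0) ?cards0 //; apply/setP => x; rewrite !inE.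
have [|c [Dc c_top c_right]] := @exists_corner a b D; first by rewrite -card_gt0 Dn.
apply: (Qint_dinv_setD1 a_gt0 ltab HD Dc c_top c_right).
apply: IH; last exact: subdiagram_setD1_corner.
by move: Dn; rewrite (cardsD1 c) Dc add1n => -[].
Qed.

Theorem theorem1p1 (R : realType) (a b : nat) (D : {set cell a b}) :
  (1 < a)%N -> (a < b)%N -> coprime a b -> subdiagram D ->
  Q (indic R D) = (dinv D)%:R /\ (D != set0 -> 0 < Q (indic R D)).
Proof.
move=> /ltnW a_gt0 ltab _ HD.
have QE : Q (indic R D) = (dinv D)%:R.
  by rewrite (Q_indicE _ HD.1) (Qint_dinv a_gt0 ltab HD) pmulrn.
split=> // /exists_corner[c [Dc c_top c_right]]; rewrite QE ltr0n.
apply/card_gt0P; exists c; rewrite inE Dc.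
exact: (dinv_cond_corner a_gt0 ltab HD Dc c_top c_right).
Qed.
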